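(* Let $n\ge 2$ be an integer and consider $n+1$ pipes $P_0,P_1,\dots,P_n$, where pipes $P_1,\dots,P_n$ join into pipe $P_0$. For $j\in\{0,1,\dots,n\}$ let $p_{j,\ell}(t),p_{j,r}(t),q_{j,\ell}(t),q_{j,r}(t)$ be real-valued differentiable functions of time satisfying the linearized pipe dynamics \[ \dot p_{j,r}=c_j\,(q_{j,r}-q_{j,\ell}),\qquad \dot q_{j,\ell}=b_j\,p_{j,r}+d_j\,p_{j,\ell}+e_j\,q_{j,\ell}, \] together with the junction constraints \[ p_{1,r}=p_{2,r}=\dots=p_{n,r}=p_{0,\ell},\qquad q_{1,r}+q_{2,r}+\dots+q_{n,r}=q_{0,\ell} \] for all $t$. Then for every $k\in\{1,\dots,n\}$ the variable $q_{k,r}$ is expressed in terms of the state variables $q_{j,\ell}$ by \[ \left(\sum_{j=1}^n\prod_{\substack{i=1\\ i\neq j}}^n c_i\right)q_{k,r}=\prod_{\substack{i=1\\ i\neq k}}^n c_i\left(q_{0,\ell}-\sum_{\substack{i=1\\ i\neq k}}^n q_{i,\ell}\right)+\left(\sum_{j=1}^n\prod_{\substack{i=1\\ i\neq j}}^n c_i-\prod_{\substack{i=1\\ i\neq k}}^n c_i\right)q_{k,\ell} \] for all $t$.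
   Context: Model of isothermal one-dimensional gas flow in a pipe $P_j$: $p$ denotes pressure, $q$ mass flow; subscripts $\ell$ and $r$ denote the values at the left end ($x=0$) and right end ($x=L_j$) of the pipe. The coefficients are $c_j=-\frac{R_sT_0z_0}{A_jL_j}$, $b_j=-\frac{A_j}{L_j}$, $d_j=\frac{A_j}{L_j}+\frac{\lambda_j R_sT_0z_0}{2D_jA_j}\frac{q_{ss,j}|q_{ss,j}|}{p_{\ell,ss,j}^2}-\frac{A_jgh_j}{R_sT_0z_0L_j}$, $e_j=-\frac{\lambda_j R_sT_0z_0}{D_jA_j}\frac{|q_{ss,j}|}{p_{\ell,ss,j}}$, where $R_s>0$ (specific gas constant), $T_0>0$ (temperature), $z_0>0$ (compressibility factor), $g$ (gravity) are constants and, for pipe $j$, $A_j>0$ is the cross-sectional area, $L_j>0$ the length, $D_j>0$ the inner diameter, $\lambda_j$ the friction factor, $h_j$ the elevation difference, and $q_{ss,j}>0$, $p_{\ell,ss,j}>0$ nominal (steady-state) mass flow and left pressure. In particular all $c_j<0$. For each pipe, $(p_{j,r},q_{j,\ell})$ are called state variables and $p_{j,\ell},q_{j,r}$ input variables. *)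

From HB Require Import structures.
From mathcomp Require Import all_boot all_order all_algebra.
From mathcomp Require Import all_classical all_reals all_analysis.
Set Implicit Arguments.
Unset Strict Implicit.
Unset Printing Implicit Defensive.
Import Order.TTheory GRing.Theory Num.Theory.
Local Open Scope ring_scope.

(* Coefficients of the linearized isothermal pipe model for pipe j.
   Rs = specific gas constant, T0 temperature, z0 compressibility factor,
   g gravity; A area, L length, D diameter, lam friction factor,
   h elevation difference, qss nominal mass flow, pss nominal left pressure. *)
Section Coefs.
Variable R : realType.
Variables (Rs T0 z0 g A L D lam h qss pss : R).

Definition pipe_c : R := - (Rs * T0 * z0) / (A * L).
Definition pipe_b : R := - A / L.
Definition pipe_d : R :=
  A / L + (lam * Rs * T0 * z0) / (2 * D * A) * (qss * `|qss|) / (pss ^+ 2)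
  - (A * g * h) / (Rs * T0 * z0 * L).
Definition pipe_e : R :=
  - (lam * Rs * T0 * z0) / (D * A) * (`|qss| / pss).
End Coefs.

From HB Require Import structures.
From mathcomp Require Import all_boot all_order all_algebra.
From mathcomp Require Import all_classical all_reals all_analysis.
From mathcomp Require Import ring.
Import Order.TTheory GRing.Theory Num.Theory.
Local Open Scope ring_scope.

(* Since the right pressures of the pipes P_1, ..., P_n all coincide with
   p_{0,l}, so do their derivatives, hence c_j (q_{j,r} - q_{j,l}) is the same
   for every j >= 1.  Multiplying by the products of the other c_i turns this
   into a linear relation between q_{k,r} - q_{k,l} and the total
   sum_j (q_{j,r} - q_{j,l}), which the flow junction condition identifies as
   q_{0,l} - sum_j q_{j,l}. *)

Section ProdExcept.

Variables (R : comPzRingType) (I : finType) (P : pred I) (c x : I -> R).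

Definition prod_except (k : I) : R := \prod_(i | P i && (i != k)) c i.

Hypothesis c_mul_x_const : {in P &, forall j m, c j * x j = c m * x m}.

Lemma prod_except_mul_swap j k :
  P j -> P k -> prod_except j * x k = prod_except k * x j.
Proof.
move=> Pj Pk; have [-> // | neq_jk] := eqVneq j k.
pose Q := \prod_(i | [&& P i, i != j & i != k]) c i.
have prod_j : prod_except j = c k * Q.
  rewrite /prod_except (bigD1 k) /=; last by rewrite Pk eq_sym.
  by congr (_ * _); apply: eq_bigl => i; rewrite -andbA.
have prod_k : prod_except k = c j * Q.
  rewrite /prod_except (bigD1 j) /=; last by rewrite Pj.
  by congr (_ * _); apply: eq_bigl => i; rewrite -andbA [(i != k) && _]andbC.
by rewrite prod_j prod_k mulrAC [RHS]mulrAC (c_mul_x_const k j).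
Qed.

Lemma sum_prod_except_mul k : P k ->
  (\sum_(j | P j) prod_except j) * x k = prod_except k * \sum_(j | P j) x j.
Proof.
move=> Pk; rewrite mulr_suml mulr_sumr.
by apply: eq_bigr => j Pj; apply: prod_except_mul_swap.
Qed.

End ProdExcept.

Theorem theorem1 (R : realType) (n : nat) (hn : (2 <= n)%N)
  (Rs T0 z0 g : R) (A L D lam h qss pss : 'I_n.+1 -> R)
  (hRs : 0 < Rs) (hT0 : 0 < T0) (hz0 : 0 < z0)
  (hA : forall j, 0 < A j) (hL : forall j, 0 < L j) (hD : forall j, 0 < D j)
  (hqss : forall j, 0 < qss j) (hpss : forall j, 0 < pss j)
  (pl pr ql qr : 'I_n.+1 -> R -> R)
  (dpl : forall j t, derivable (pl j) t 1)
  (dpr : forall j t, derivable (pr j) t 1)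
  (dql : forall j t, derivable (ql j) t 1)
  (dqr : forall j t, derivable (qr j) t 1)
  (dyn_p : forall j t,
     derive1 (pr j) t = pipe_c Rs T0 z0 (A j) (L j) * (qr j t - ql j t))
  (dyn_q : forall j t,
     derive1 (ql j) t = pipe_b (A j) (L j) * pr j t
                    + pipe_d Rs T0 z0 g (A j) (L j) (D j) (lam j) (h j) (qss j) (pss j) * pl j t
                    + pipe_e Rs T0 z0 (A j) (D j) (lam j) (qss j) (pss j) * ql j t)
  (junc_p : forall j t, j != ord0 -> pr j t = pl ord0 t)
  (junc_q : forall t, \sum_(j < n.+1 | j != ord0) qr j t = ql ord0 t) :
  let c j := pipe_c Rs T0 z0 (A j) (L j) in
  let Pi k := \prod_(i < n.+1 | (i != ord0) && (i != k)) c i in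
  let S := \sum_(j < n.+1 | j != ord0) Pi j in
  forall (k : 'I_n.+1), k != ord0 -> forall t,
    S * qr k t =
      Pi k * (ql ord0 t - \sum_(i < n.+1 | (i != ord0) && (i != k)) ql i t)
      + (S - Pi k) * ql k t.
Proof.
move=> c Pi S k k0 t.
pose x j := qr j t - ql j t.
have c_mul_x_const j m : j != ord0 -> m != ord0 -> c j * x j = c m * x m.
  move=> j0 m0; rewrite -!dyn_p.
  by congr (derive1 _ t); apply: boolp.funext => s; rewrite !junc_p.
have sum_x : \sum_(j < n.+1 | j != ord0) x j =
    ql ord0 t - ql k t - \sum_(i < n.+1 | (i != ord0) && (i != k)) ql i t.
  by rewrite sumrB junc_q (bigD1 k) //= opprD addrA.
have S_mul_x : S * x k = Pi k * \sum_(j < n.+1 | j != ord0) x j.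
  exact: (@sum_prod_except_mul _ _ _ c x c_mul_x_const k k0).
rewrite sum_x /x in S_mul_x.
have -> : S * qr k t = S * (qr k t - ql k t) + S * ql k t by ring.
rewrite S_mul_x; ring.
Qed.
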